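(* Under the full cost model, the competitive ratio of the (offline-chosen) better algorithm among MTFE, MTFO and TS is at least $1.6$: for every $c<1.6$ and every constant $b$, there exist a list and a request sequence $\sigma$ with $\min\{\mathrm{TS}(\sigma),\mathrm{MTFO}(\sigma),\mathrm{MTFE}(\sigma)\}>c\cdot\mathrm{OPT}(\sigma)+b$.
   Context: Static list update: a list of $l$ distinct items in some initial order; serving a request to the item at position $i$ (from the front) costs $i$ (full cost model); the accessed item may be moved closer to the front for free; two adjacent items may be swapped at cost $1$. $A(\sigma)$ is the total cost of algorithm $A$ and $\mathrm{OPT}(\sigma)$ the minimum cost of any offline algorithm from the same initial list. MTFO moves a requested item to the front on the 1st, 3rd, 5th, ... request to that item; MTFE on the 2nd, 4th, 6th, ... request; otherwise they leave it in place. TS (Timestamp): on a request to item $x$, if $x$ has been requested before and some item preceding $x$ has been requested at most once since the previous request to $x$, then $x$ is moved to immediately in front of the frontmost such item; otherwise nothing moves. *)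

From mathcomp Require Import all_boot.
Set Implicit Arguments. Unset Strict Implicit. Unset Printing Implicit Defensive.

(* Items are natural numbers; a list configuration is a [seq nat] (uniq).
   Position of x (1-based) in L is [index x L + 1]: the full cost model. *)
Definition access_cost (x : nat) (L : seq nat) : nat := (index x L).+1.

Definition move_to_front (x : nat) (L : seq nat) : seq nat := x :: rem x L.

Definition insert_at (j x : nat) (L : seq nat) : seq nat :=
  take j L ++ x :: drop j L.

(* An online deterministic list-update rule: given the history of past
   requests [h], the current list [L] and the current request [x], return the
   new list (only free moves of x are used by MTFO/MTFE/TS). *)
Definition rule := seq nat -> seq nat -> nat -> seq nat.

Fixpoint run_from (A : rule) (h L s : seq nat) : nat :=
  match s with
  | [::] => 0
  | x :: s' => access_cost x L + run_from A (rcons h x) (A h L x) s'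
  end.

Definition cost (A : rule) (L sigma : seq nat) : nat := run_from A [::] L sigma.

(* MTFO: move to front on the 1st, 3rd, 5th, ... request to x,
   i.e. when the number of previous requests to x is even. *)
Definition MTFO : rule := fun h L x =>
  if ~~ odd (count_mem x h) then move_to_front x L else L.

(* MTFE: move to front on the 2nd, 4th, 6th, ... request to x. *)
Definition MTFE : rule := fun h L x =>
  if odd (count_mem x h) then move_to_front x L else L.

(* Requests strictly after the previous request to x (in reverse order,
   which is irrelevant since only counts are used). *)
Definition since_last (x : nat) (h : seq nat) : seq nat :=
  take (index x (rev h)) (rev h).

Definition TS : rule := fun h L x =>
  if x \in h then
    let w := since_last x h in
    let pre := take (index x L) L in
    let P := fun y => count_mem y w <= 1 in
    if has P pre then
      (* frontmost such item y, at 0-based position i = find P pre;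
         x is moved immediately in front of it *)
      insert_at (find P pre) x (rem x L)
    else L
  else L.

(* Before serving each request, the algorithm performs
   an arbitrary sequence of paid adjacent transpositions (cost 1 each); the
   transposition [i] swaps the items at 0-based positions i and i+1 (if
   i+1 is out of range it has no effect but still costs 1, which is never
   beneficial); then it pays the access cost; then it may move the accessed
   item for free to any 0-based position j not beyond its current one
   (j is clamped to the current position). *)
Definition swap_adj (i : nat) (L : seq nat) : seq nat :=
  if i.+1 < size L then
    take i L ++ [:: nth 0 L i.+1; nth 0 L i] ++ drop i.+2 L
  else L.

Definition apply_swaps (sw : seq nat) (L : seq nat) : seq nat :=
  foldl (fun L i => swap_adj i L) L sw.

Definition free_move (j x : nat) (L : seq nat) : seq nat :=
  insert_at (minn j (index x L)) x (rem x L).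

(* A schedule gives, for each request, (paid swaps, target position).
   Missing entries default to (no swaps, move to front), itself a legal action. *)
Definition action := (seq nat * nat)%type.

Fixpoint offline_cost (L s : seq nat) (S : seq action) : nat :=
  match s with
  | [::] => 0
  | x :: s' =>
      let a := head ([::], 0) S in
      let L1 := apply_swaps a.1 L in
      size a.1 + access_cost x L1 +
      offline_cost (free_move a.2 x L1) s' (behead S)
  end.

Definition is_OPT (L sigma : seq nat) (n : nat) : Prop :=
  (exists S, offline_cost L sigma S = n) /\
  (forall S, n <= offline_cost L sigma S).

(* The adversary works on the list [1; ...; 32] and repeats a fixed phase
   [period] = R ++ R, where the round R requests the items in decreasing order
   twice each, then in increasing order twice each, then in decreasing order
   once each.  Every item occurs an even number of times in a phase, and the
   decisions of the three online rules on an item already requested in the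
   current phase do not depend on anything before the phase (they only see the
   parity of past request counts, resp. the requests since the last request
   to the item).  Hence, after one warm-up phase, each rule runs periodically,
   and a direct computation shows that it pays 5280 per phase.  Offline, the
   schedule "move to front during the double sweeps, never move during the
   single sweep" is also periodic and pays 3792 on the first phase and 3296 on
   every later one.  Since 5280 > 1.6 * 3296, with enough phases the cost of
   each online rule exceeds c * OPT + b. *)

From mathcomp Require Import all_boot.
From Stdlib Require Import Reals Lra Classical Wf_nat.

Set Implicit Arguments. Unset Strict Implicit. Unset Printing Implicit Defensive.

Fixpoint final_list (A : rule) (h L s : seq nat) : seq nat :=
  match s with
  | [::] => L
  | x :: s' => final_list A (rcons h x) (A h L x) s'
  end.

Lemma run_from_cat A s1 s2 h L :
  run_from A h L (s1 ++ s2) =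
  run_from A h L s1 + run_from A (h ++ s1) (final_list A h L s1) s2.
Proof.
elim: s1 h L => [|x s1 IH] h L /=; first by rewrite cats0.
by rewrite IH addnA cat_rcons.
Qed.

Definition even_history (h : seq nat) : Prop := forall y, ~~ odd (count_mem y h).

Definition forgets_even_prefix (A : rule) : Prop :=
  forall h0 q L x, even_history h0 -> x \in q -> A (h0 ++ q) L x = A q L x.

Lemma MTFO_forgets : forgets_even_prefix MTFO.
Proof. by move=> h0 q L x h0_even _; rewrite /MTFO count_cat oddD (negbTE (h0_even x)). Qed.

Lemma MTFE_forgets : forgets_even_prefix MTFE.
Proof. by move=> h0 q L x h0_even _; rewrite /MTFE count_cat oddD (negbTE (h0_even x)). Qed.

(* TS only looks at the requests since the previous request to [x]. *)
Lemma TS_forgets : forgets_even_prefix TS.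
Proof.
move=> h0 q L x _ xq.
have since_last_q : since_last x (h0 ++ q) = since_last x q.
  rewrite /since_last rev_cat index_cat mem_rev xq take_cat.
  by rewrite index_mem mem_rev xq.
by rewrite /TS mem_cat xq orbT since_last_q.
Qed.

Lemma run_from_even_prefix A h0 s q L :
  forgets_even_prefix A -> even_history h0 -> {subset s <= q} ->
  run_from A (h0 ++ q) L s = run_from A q L s.
Proof.
move=> A_forgets h0_even; elim: s q L => [|x s IH] q L s_q //=.
have xq : x \in q by apply: s_q; rewrite inE eqxx.
rewrite A_forgets // rcons_cat IH // => y ys.
by rewrite mem_rcons inE s_q ?orbT // inE ys orbT.
Qed.

Lemma flatten_nseqS (T : Type) (P : seq T) k :
  flatten (nseq k.+1 P) = P ++ flatten (nseq k P).
Proof. by []. Qed.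

Lemma mem_flatten_nseq (P : seq nat) k : {subset flatten (nseq k P) <= P}.
Proof. by elim: k => [|k IH] y //; rewrite flatten_nseqS mem_cat => /orP [] // /IH. Qed.

Lemma run_from_repeat A P X c :
  forgets_even_prefix A -> even_history P ->
  final_list A P X P = X -> run_from A P X P = c ->
  forall k, run_from A P X (flatten (nseq k P)) = k * c.
Proof.
move=> A_forgets P_even fixX costX; elim=> [|k IH] //.
rewrite flatten_nseqS run_from_cat fixX costX run_from_even_prefix //; last exact: mem_flatten_nseq.
by rewrite IH mulSn.
Qed.

Fixpoint offline_final (L s : seq nat) (S : seq action) : seq nat :=
  match s with
  | [::] => L
  | x :: s' =>
      let a := head ([::], 0) S in
      offline_final (free_move a.2 x (apply_swaps a.1 L)) s' (behead S)
  end.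

Lemma offline_cost_cat L s1 s2 S1 S2 : size S1 = size s1 ->
  offline_cost L (s1 ++ s2) (S1 ++ S2) =
  offline_cost L s1 S1 + offline_cost (offline_final L s1 S1) s2 S2.
Proof.
elim: s1 L S1 => [|x s1 IH] L [|a S1] //= [] sizeS1.
by rewrite IH // addnA.
Qed.

Lemma offline_cost_repeat P AP Y c : size AP = size P ->
  offline_final Y P AP = Y -> offline_cost Y P AP = c ->
  forall k, offline_cost Y (flatten (nseq k P)) (flatten (nseq k AP)) = k * c.
Proof.
move=> sizeAP fixY costY; elim=> [|k IH] //.
by rewrite !flatten_nseqS offline_cost_cat // fixY costY IH mulSn.
Qed.

(* Every instance has an optimal offline cost (costs are natural numbers). *)
Lemma OPT_exists L sigma : exists opt, is_OPT L sigma opt.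
Proof.
pose achieved n := exists S, offline_cost L sigma S = n.
have [opt [[achieved_opt opt_least] _]] :
    has_unique_least_element le achieved.
  apply: dec_inh_nat_subset_has_unique_least_element; first by move=> n; apply: classic.
  by exists (offline_cost L sigma [::]), [::].
exists opt; split; first exact: achieved_opt.
move=> S; apply/leP; apply: opt_least.
by exists S.
Qed.

Lemma eventually_exceeds (a o o1 c b : R) :
  (0 < a -> 0 <= o -> 0 <= o1 -> c * o < a ->
  exists k : nat, forall x y,
    INR k * a <= x -> 0 <= y <= o1 + INR k * o -> c * y + b < x)%R.
Proof.
move=> a_pos o_ge0 o1_ge0 co_lt_a.
pose c' := Rmax c 0.
have c'_ge0 : (0 <= c')%R by apply: Rmax_r.
have c_le_c' : (c <= c')%R by apply: Rmax_l.
have gap : (0 < a - c' * o)%R.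
  by rewrite /c' /Rmax; case: Rle_dec => _; lra.
have [k k_large] := INR_unbounded ((c' * o1 + Rabs b) / (a - c' * o)).
have slack : (c' * o1 + Rabs b < INR k * (a - c' * o))%R.
  apply: (Rmult_lt_reg_r (/ (a - c' * o))); first exact: Rinv_0_lt_compat.
  by rewrite Rmult_assoc Rinv_r ?Rmult_1_r; lra.
exists k => x y k_le_x [y_ge0 y_le].
have cy_le : (c * y <= c' * (o1 + INR k * o))%R.
  apply: Rle_trans (Rmult_le_compat_r _ _ _ y_ge0 c_le_c') _.
  exact: Rmult_le_compat_l.
have := Rle_abs b; lra.
Qed.

Definition n_items := 32.
Definition L0 : seq nat := iota 1 n_items.

Definition sweep (down : bool) (m : nat) : seq nat :=
  flatten [seq nseq m x | x <- if down then rev L0 else L0].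

Definition round : seq nat := sweep true 2 ++ sweep false 2 ++ sweep true 1.
Definition period : seq nat := round ++ round.

Definition adversary (k : nat) : seq nat := flatten (nseq k.+1 period).

(* Offline: move to front during the double sweeps, stay during the single one. *)
Definition offline_round : seq action :=
  nseq (4 * n_items) ([::], 0) ++ nseq n_items ([::], n_items).
Definition offline_period : seq action := offline_round ++ offline_round.
Definition offline_schedule (k : nat) : seq action :=
  flatten (nseq k.+1 offline_period).

Definition online_phase_cost := 5280.
Definition offline_phase_cost := 3296.
Definition offline_warmup_cost := 3792.

Lemma period_even : even_history period.
Proof. by move=> y; rewrite /period count_cat oddD addbb. Qed.

Definition steady (A : rule) : Prop :=
  let X := final_list A [::] L0 period in
  final_list A period X period = X /\ run_from A period X period = online_phase_cost.

Lemma TS_steady : steady TS. Proof. by split; vm_compute. Qed.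
Lemma MTFO_steady : steady MTFO. Proof. by split; vm_compute. Qed.
Lemma MTFE_steady : steady MTFE. Proof. by split; vm_compute. Qed.

Lemma online_cost_lower A k :
  forgets_even_prefix A -> steady A ->
  k * online_phase_cost <= cost A L0 (adversary k).
Proof.
move=> A_forgets [fixX costX]; rewrite /cost /adversary flatten_nseqS run_from_cat cat0s.
by rewrite (run_from_repeat A_forgets period_even fixX costX) leq_addl.
Qed.

Lemma best_online_cost_lower k :
  k * online_phase_cost <=
  minn (cost TS L0 (adversary k))
       (minn (cost MTFO L0 (adversary k)) (cost MTFE L0 (adversary k))).
Proof.
have leq_min3 m x y z : m <= x -> m <= y -> m <= z -> m <= minn x (minn y z).
  by rewrite !leq_min => -> -> ->.
exact: leq_min3 (online_cost_lower k TS_forgets TS_steady)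
  (online_cost_lower k MTFO_forgets MTFO_steady)
  (online_cost_lower k MTFE_forgets MTFE_steady).
Qed.

Lemma offline_schedule_cost k :
  offline_cost L0 (adversary k) (offline_schedule k) =
  offline_warmup_cost + k * offline_phase_cost.
Proof.
have size_period : size offline_period = size period by vm_compute.
have warmup : offline_cost L0 period offline_period = offline_warmup_cost.
  by vm_compute.
have fixY : offline_final (offline_final L0 period offline_period) period
              offline_period = offline_final L0 period offline_period.
  by vm_compute.
have costY : offline_cost (offline_final L0 period offline_period) period
               offline_period = offline_phase_cost.
  by vm_compute.
rewrite /adversary /offline_schedule !flatten_nseqS.
rewrite offline_cost_cat; last exact: size_period.
by rewrite warmup (offline_cost_repeat size_period fixY costY).
Qed.

Lemma adversary_in_list k : all (fun x => x \in L0) (adversary k).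
Proof.
apply/allP => x /mem_flatten_nseq x_period.
by move: x x_period; apply/allP; vm_compute.
Qed.

Lemma INR_costs :
  INR online_phase_cost = 5280%R /\ INR offline_phase_cost = 3296%R /\
  INR offline_warmup_cost = 3792%R.
Proof. by rewrite !INR_IZR_INZ. Qed.

(* From now on the costs stay folded: unfolding them into unary numerals
   would make unification with the cost expressions expensive. *)
Opaque online_phase_cost offline_phase_cost offline_warmup_cost.

Theorem theorem5 :
  forall c b : R, (c < 16 / 10)%R ->
  exists (L sigma : seq nat) (opt : nat),
    uniq L /\ all (fun x => x \in L) sigma /\
    is_OPT L sigma opt /\
    (INR (minn (cost TS L sigma) (minn (cost MTFO L sigma) (cost MTFE L sigma)))
       > c * INR opt + b)%R.
Proof.
move=> c b c_lt.
have [a_val [o_val o1_val]] := INR_costs.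
have [k k_large] : exists k : nat, forall x y,
    (INR k * INR online_phase_cost <= x ->
     0 <= y <= INR offline_warmup_cost + INR k * INR offline_phase_cost ->
     c * y + b < x)%R.
  by apply: eventually_exceeds; rewrite ?a_val ?o_val ?o1_val; lra.
have [opt opt_is_OPT] := OPT_exists L0 (adversary k).
exists L0, (adversary k), opt.
split; first exact: iota_uniq.
split; first exact: adversary_in_list.
split; first exact: opt_is_OPT.
apply: k_large.
- by rewrite -mult_INR; apply/le_INR/leP/best_online_cost_lower.
- have opt_le : opt <= offline_warmup_cost + k * offline_phase_cost.
    by rewrite -offline_schedule_cost; case: opt_is_OPT => _; apply.
  split; first exact: pos_INR.
  by move/leP/le_INR: opt_le; rewrite plus_INR mult_INR.
Qed.
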